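(* Consider a multi-rate fluid assignment (rates $\theta_i^L$ for $\tau_i\in\tau$; $\theta_{i,j}^H$, $\theta_i^H$ for $\tau_i\in\tau_H$, $1\le j\le n_H$; window durations $w_1,\dots,w_{n_H}\ge 0$) such that $\theta_{i,j}^H=\theta_i^H$ for all $\tau_i\in\tau_H$ and all $1\le j\le n_H$. Then the multi-rate conditions (S1)–(S5) hold if and only if the dual-rate conditions (D1)–(D5) hold.
   Context: Task system $\tau$ on $m$ identical processors; each task $\tau_i$ has period/deadline $T_i>0$, criticality in $\{LO,HI\}$, WCETs $C_i^L\le C_i^H$, $u_i^L=C_i^L/T_i\le1$, $u_i^H=C_i^H/T_i\le1$; $\tau_H$ is the set of HI-tasks, $n_H=|\tau_H|$. All rates lie in $(0,1]$ (transition rates in $[0,1]$). The earliest completion window of $\tau_i\in\tau_H$ is the largest $k_i\in\{1,\dots,n_H+1\}$ with $\sum_{j:1\le j<k_i}w_j<T_i-C_i^L/\theta_i^L$; $R_i=\theta_{i,k_i}^H$ if $k_i\le n_H$ and $R_i=\theta_i^H$ otherwise; by convention $\theta_{i,n_H+1}^H:=\theta_i^H$. Multi-rate conditions: (S1) $\theta_i^L\ge u_i^L$ for all $\tau_i\in\tau$; (S2) $\sum_{\tau_i\in\tau}\theta_i^L\le m$; (S3) $\sum_{\tau_i\in\tau_H}\theta_{i,j}^H\le m$ for all $1\le j\le n_H$, and $\sum_{\tau_i\in\tau_H}\theta_i^H\le m$; (S4) for all $\tau_i\in\tau_H$: $\sum_{j<k_i}\theta_{i,j}^Hw_j+R_i(T_i-C_i^L/\theta_i^L-\sum_{j<k_i}w_j)\ge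 C_i^H-C_i^L$, $\theta_i^L\le\theta_{i,j}^H$ for $k_i\le j\le n_H$, and $\theta_i^L\le\theta_i^H$; (S5) for all $\tau_i\in\tau_H$: $\sum_{j<k_i}\theta_{i,j}^Hw_j\ge u_i^H\sum_{j<k_i}w_j$, $\theta_{i,j}^H\le\theta_{i,j+1}^H$ for $1\le j<k_i$, $\theta_{i,j}^H\ge u_i^H$ for $k_i\le j\le n_H$, and $\theta_i^H\ge u_i^H$. Dual-rate conditions: (D1) $\theta_i^L\ge u_i^L$ for all $\tau_i\in\tau$; (D2) $u_i^L/\theta_i^L+(u_i^H-u_i^L)/\theta_i^H\le1$ for all $\tau_i\in\tau_H$; (D3) $\theta_i^H\ge\theta_i^L$ for all $\tau_i\in\tau_H$; (D4) $\sum_{\tau_i\in\tau}\theta_i^L\le m$; (D5) $\sum_{\tau_i\in\tau_H}\theta_i^H\le m$. *)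

From HB Require Import structures.
From mathcomp Require Import all_boot all_order all_algebra.
Set Implicit Arguments. Unset Strict Implicit. Unset Printing Implicit Defensive.
Import Order.TTheory GRing.Theory Num.Theory.
Local Open Scope ring_scope.

Definition nHI (n : nat) (hi : 'I_n -> bool) : nat := #|[set i | hi i]|.

(* earliest completion window k_i: largest k in {1,..,nH+1} with
   sum_{1<=j<k} w_j < T - CL/thL  (defaults to 1 if no such k exists) *)
Definition ecw (R : realFieldType) (nH : nat) (w : nat -> R) (T CL thL : R) : nat :=
  \max_(k < nH.+2 | [&& (1 <= (k : nat))%N &
       (((k : nat) == 1%N) || (\sum_(1 <= j < k) w j < T - CL / thL))]) (k : nat).

(* theta^H_{i,j} extended by the convention theta^H_{i,nH+1} := theta^H_i *)
Definition thHext (R : realFieldType) (nH : nat) (thHj : nat -> R) (thH : R) (j : nat) : R :=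
  if (j <= nH)%N then thHj j else thH.

(* multi-rate conditions (S1)-(S5); task i has period T i, WCETs CL i, CH i,
   low rate thL i, window rates thHj i j (1<=j<=nH), final rate thH i;
   window durations w j (1<=j<=nH) *)
Definition multirate (R : realFieldType) (n m : nat) (hi : 'I_n -> bool)
  (T CL CH thL thH : 'I_n -> R) (thHj : 'I_n -> nat -> R) (w : nat -> R) : Prop :=
  let nH := nHI hi in
  let uL i := CL i / T i in
  let uH i := CH i / T i in
  [/\ (forall i, uL i <= thL i),
      \sum_i thL i <= m%:R,
      (forall j, (1 <= j <= nH)%N -> \sum_(i | hi i) thHj i j <= m%:R)
               /\ \sum_(i | hi i) thH i <= m%:R,
      (forall i, hi i ->
                 let k := ecw nH w (T i) (CL i) (thL i) in
                 let Ri := thHext nH (thHj i) (thH i) k in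
                 [/\ \sum_(1 <= j < k) thHj i j * w j
                       + Ri * (T i - CL i / thL i - \sum_(1 <= j < k) w j)
                       >= CH i - CL i,
                     (forall j, (k <= j <= nH)%N -> thL i <= thHj i j)
                   & thL i <= thH i])
    & (forall i, hi i ->
                 let k := ecw nH w (T i) (CL i) (thL i) in
                 [/\ \sum_(1 <= j < k) thHj i j * w j >= uH i * \sum_(1 <= j < k) w j,
                     (forall j, (1 <= j < k)%N ->
                        thHext nH (thHj i) (thH i) j <= thHext nH (thHj i) (thH i) j.+1),
                     (forall j, (k <= j <= nH)%N -> uH i <= thHj i j)
                   & uH i <= thH i])].

Definition dualrate (R : realFieldType) (n m : nat) (hi : 'I_n -> bool)
  (T CL CH thL thH : 'I_n -> R) : Prop :=
  let uL i := CL i / T i in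
  let uH i := CH i / T i in
  [/\ (forall i, uL i <= thL i),
      (forall i, hi i -> uL i / thL i + (uH i - uL i) / thH i <= 1),
      (forall i, hi i -> thL i <= thH i),
      \sum_i thL i <= m%:R
    & \sum_(i | hi i) thH i <= m%:R].

From HB Require Import structures.
From mathcomp Require Import all_boot all_order all_algebra.
From mathcomp Require Import ring lra.
Import Order.TTheory GRing.Theory Num.Theory.
Local Open Scope ring_scope.

(** When every window rate equals the final rate [thH], the total HI-mode
    service [thH * (T - CL / thL)] no longer depends on the windows, so (S4)
    collapses to the single budget inequality (D2) and (S5) to [uH <= thH],
    which (D1)-(D3) already imply. *)

Lemma ecw_bounds (R : realFieldType) nH (w : nat -> R) T CL thL :
  (1 <= ecw nH w T CL thL <= nH.+1)%N.
Proof.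
rewrite /ecw; apply/andP; split.
  have := @leq_bigmax_cond _ (fun k : 'I_nH.+2 => [&& (1 <= (k : nat))%N &
       (((k : nat) == 1%N) || (\sum_(1 <= j < k) w j < T - CL / thL))])
       (fun k => (k : nat)) (inord 1).
  by rewrite inordK // eqxx /=; apply.
by apply/bigmax_leqP => k _; rewrite -ltnS ltn_ord.
Qed.

Lemma thHext_const (R : realFieldType) nH (f : nat -> R) c j :
  (forall j, (1 <= j <= nH)%N -> f j = c) -> (0 < j)%N -> thHext nH f c j = c.
Proof. by move=> fc j_gt0; rewrite /thHext; case: ifP => // jn; rewrite fc ?j_gt0. Qed.

Lemma sum_mul_const_rate (R : realFieldType) (f w : nat -> R) c k :
  (forall j, (1 <= j < k)%N -> f j = c) ->
  \sum_(1 <= j < k) f j * w j = c * \sum_(1 <= j < k) w j.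
Proof. by move=> fc; rewrite mulr_sumr; apply: eq_big_nat => j /fc ->. Qed.

Lemma budget_utilizationE (R : realFieldType) (T CL CH thL thH : R) :
  0 < T -> 0 < thL -> 0 < thH ->
  (CH - CL <= thH * (T - CL / thL)) =
  (CL / T / thL + (CH / T - CL / T) / thH <= 1).
Proof.
move=> T_gt0 thL_gt0 thH_gt0.
have -> : CL / T / thL + (CH / T - CL / T) / thH
    = (CH - CL + thH * (CL / thL)) / (T * thH).
  by field; rewrite ?gt_eqF ?mulr_gt0.
by rewrite ler_pdivrMr ?mulr_gt0 // mul1r; apply/idP/idP => ?; lra.
Qed.

Lemma util_le_rate (R : realFieldType) (uL uH thL thH : R) :
  0 <= uL -> 0 < thL <= thH -> uL / thL + (uH - uL) / thH <= 1 -> uH <= thH.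
Proof.
move=> uL_ge0 /andP[thL_gt0 thL_le] budget.
have thH_gt0 : 0 < thH by apply: lt_le_trans thL_le.
have uL_thH : uL / thH <= uL / thL by rewrite ler_wpM2l // lef_pV2 ?posrE.
have split_uH : uH / thH = uL / thH + (uH - uL) / thH by field; rewrite gt_eqF.
by rewrite -[thH in _ <= thH]mul1r -ler_pdivrMr // split_uH; lra.
Qed.

Section ConstantWindowRates.

Variables (R : realFieldType) (n m : nat) (hi : 'I_n -> bool).
Variables (T CL CH thL thH : 'I_n -> R) (thHj : 'I_n -> nat -> R) (w : nat -> R).

Hypothesis T_gt0 : forall i, 0 < T i.
Hypothesis CL_ge0 : forall i, 0 <= CL i.
Hypothesis thL_gt0 : forall i, 0 < thL i.
Hypothesis thH_gt0 : forall i, hi i -> 0 < thH i.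
Hypothesis w_ge0 : forall j, (1 <= j <= nHI hi)%N -> 0 <= w j.
Hypothesis thHj_const : forall i j, hi i -> (1 <= j <= nHI hi)%N -> thHj i j = thH i.

Local Notation nH := (nHI hi).
Local Notation k i := (ecw nH w (T i) (CL i) (thL i)).
Local Notation thHx i := (thHext nH (thHj i) (thH i)).

Lemma k_bounds i : (1 <= k i <= nH.+1)%N.
Proof. exact: ecw_bounds. Qed.

Lemma thHx_const i j : hi i -> (0 < j)%N -> thHx i j = thH i.
Proof. by move=> hii; apply: thHext_const => j'; apply: thHj_const. Qed.

Lemma sum_window_service i : hi i ->
  \sum_(1 <= j < k i) thHj i j * w j = thH i * \sum_(1 <= j < k i) w j.
Proof.
move=> hii; apply: sum_mul_const_rate => j /andP[j_ge1 j_lt].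
have /andP[_ k_le] := k_bounds i.
by rewrite thHj_const // j_ge1 -ltnS (leq_trans j_lt).
Qed.

Lemma sum_window_ge0 i : 0 <= \sum_(1 <= j < k i) w j.
Proof.
have /andP[_ k_le] := k_bounds i.
rewrite big_nat_cond; apply: sumr_ge0 => j /andP[/andP[j_ge1 j_lt] _].
by rewrite w_ge0 // j_ge1 -ltnS (leq_trans j_lt).
Qed.

Lemma window_budgetE i : hi i ->
  (CH i - CL i <= \sum_(1 <= j < k i) thHj i j * w j
     + thHx i (k i) * (T i - CL i / thL i - \sum_(1 <= j < k i) w j)) =
  (CL i / T i / thL i + (CH i / T i - CL i / T i) / thH i <= 1).
Proof.
move=> hii; have /andP[k_ge1 _] := k_bounds i.
rewrite sum_window_service // thHx_const // -budget_utilizationE ?thH_gt0 //.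
by congr (_ <= _); ring.
Qed.

Lemma multirate_dualrate :
  multirate m hi T CL CH thL thH thHj w -> dualrate m hi T CL CH thL thH.
Proof.
move=> [S1 S2 [_ S3] S4 _]; split=> // i /[dup] hii /S4 [budget _ ?] //.
by rewrite -window_budgetE.
Qed.

Lemma dualrate_multirate :
  dualrate m hi T CL CH thL thH -> multirate m hi T CL CH thL thH thHj w.
Proof.
move=> [D1 D2 D3 D4 D5].
have uH_le i : hi i -> CH i / T i <= thH i.
  move=> hii; apply: util_le_rate (D2 i hii).
    exact: divr_ge0 (CL_ge0 i) (ltW (T_gt0 i)).
  by rewrite thL_gt0 D3.
have thHj_tail i j : hi i -> (k i <= j <= nH)%N -> thHj i j = thH i.
  move=> hii /andP[k_le j_le]; have /andP[k_ge1 _] := k_bounds i.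
  by rewrite thHj_const // j_le (leq_trans k_ge1 k_le).
split=> //.
- split=> // j jn; rewrite (eq_bigr (fun i => thH i)) // => i hii.
  exact: thHj_const.
- move=> i hii; split; last exact: D3.
  + by rewrite window_budgetE ?D2.
  + by move=> j /(thHj_tail i j hii) ->; apply: D3.
- move=> i hii; split; last exact: uH_le.
  + by rewrite sum_window_service // ler_wpM2r ?sum_window_ge0 ?uH_le.
  + by move=> j /andP[j_ge1 _]; rewrite !thHx_const // (leq_trans _ j_ge1).
  + by move=> j /(thHj_tail i j hii) ->; apply: uH_le.
Qed.

End ConstantWindowRates.

Theorem lemma2 (R : realFieldType) (n m : nat) (hi : 'I_n -> bool)
  (T CL CH thL thH : 'I_n -> R) (thHj : 'I_n -> nat -> R) (w : nat -> R) :
  (0 < m)%N ->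
  (forall i, 0 < T i) ->
  (forall i, 0 <= CL i <= CH i) ->
  (forall i, CL i / T i <= 1) ->
  (forall i, CH i / T i <= 1) ->
  (forall i, 0 < thL i <= 1) ->
  (forall i, hi i -> 0 < thH i <= 1) ->
  (forall i j, hi i -> (1 <= j <= nHI hi)%N -> 0 <= thHj i j <= 1) ->
  (forall j, (1 <= j <= nHI hi)%N -> 0 <= w j) ->
  (forall i j, hi i -> (1 <= j <= nHI hi)%N -> thHj i j = thH i) ->
  (multirate m hi T CL CH thL thH thHj w <-> dualrate m hi T CL CH thL thH).
Proof.
move=> _ T_gt0 C_bounds _ _ thL_bounds thH_bounds _ w_ge0 thHj_const.
have CL_ge0 i : 0 <= CL i by case/andP: (C_bounds i).
have thL_gt0 i : 0 < thL i by case/andP: (thL_bounds i).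
have thH_gt0 i : hi i -> 0 < thH i by move/thH_bounds/andP=> [].
split; first exact: multirate_dualrate.
exact: dualrate_multirate.
Qed.
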